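(* Let $b$ be a positive integer. The Frobenius endomorphism $F_b:\mathbb Z[1/b][q]^{\mathbb N_b}\to\mathbb Z[1/b][q]^{\mathbb N_b}$, induced by $q\mapsto q^b$, is a well-defined algebra isomorphism.
   Context: $\mathbb N_b=\{n\in\mathbb N:(n,b)=1\}$. For $S\subset\mathbb N$, $\mathbb Z[1/b][q]^S=\varprojlim_{f\in\Phi^*_S}\mathbb Z[1/b][q]/(f)$, where $\Phi^*_S$ is the multiplicative set generated by the cyclotomic polynomials $\Phi_n(q)$, $n\in S$, directed by divisibility. $F_b$ is the inverse limit of the maps $\mathbb Z[1/b][q]/(\prod_i\Phi_{n_i}^{k_i})\to\mathbb Z[1/b][q]/(\prod_i\Phi_{n_i}^{k_i})$, $q\mapsto q^b$, for finitely many $n_i\in\mathbb N_b$, $k_i\in\mathbb N$. *)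

From HB Require Import structures.
From mathcomp Require Import all_boot all_order all_algebra all_field.
Set Implicit Arguments. Unset Strict Implicit. Unset Printing Implicit Defensive.
Import Order.TTheory GRing.Theory Num.Theory.
Local Open Scope ring_scope.

(* Z[1/b] as the subring of rat of elements m / b^k. *)
Definition inZb (b : nat) (x : rat) : Prop :=
  exists (m : int) (k : nat), x = m%:~R / (b ^ k)%N%:R.

Definition polyZb (b : nat) (p : {poly rat}) : Prop :=
  forall i : nat, inZb b p`_i.

Definition congrZb (b : nat) (f p r : {poly rat}) : Prop :=
  exists h : {poly rat}, polyZb b h /\ p - r = h * f.

Definition dvdZb (b : nat) (f g : {poly rat}) : Prop := congrZb b f g 0.

Definition PhiStar (b : nat) (f : {poly rat}) : Prop :=
  exists s : seq nat, all (fun n => (0 < n)%N && coprime n b) s /\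
    f = \prod_(n <- s) map_poly intr 'Phi_n.

(* Elements of the inverse limit Z[1/b][q]^{N_b}: compatible families
   (x_f)_f, x_f a representative in Z[1/b][q] of a class in Z[1/b][q]/(f). *)
Definition limfam (b : nat) (x : {poly rat} -> {poly rat}) : Prop :=
  (forall f, PhiStar b f -> polyZb b (x f)) /\
  (forall f g, PhiStar b f -> PhiStar b g -> dvdZb b f g ->
     congrZb b f (x g) (x f)).

Definition limeq (b : nat) (x y : {poly rat} -> {poly rat}) : Prop :=
  forall f, PhiStar b f -> congrZb b f (x f) (y f).

Definition Frob (b : nat) (x : {poly rat} -> {poly rat}) : {poly rat} -> {poly rat} :=
  fun f => x f \Po 'X^b.

(* Being compatible with all ring operations, F_b is a well-defined algebra
   endomorphism as soon as it preserves every ideal (f); this holds since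
   Phi_n divides Phi_n(q^b) for (n, b) = 1.  The heart of the proof is an
   inverse of F_b modulo each such f.  Let N be the product of the n's, so
   that f divides (q^N - 1)^K for K large, and let b c = 1 mod N.  Modulo
   q^N - 1 the polynomial q^c is a b-th root of q at which the derivative
   b q^(c(b-1)) is invertible (b is a unit in Z[1/b]), so Hensel lifting
   gives P with P^b = q modulo (q^N - 1)^K; uniqueness of Hensel lifts shows
   P(q^b) = q as well.  Hence y |-> y(P) is inverse to F_b modulo f, which
   gives injectivity and, after choosing such a P for every f, surjectivity. *)

From Stdlib Require Import ClassicalEpsilon.
From HB Require Import structures.
From mathcomp Require Import all_boot all_algebra all_field.
From mathcomp Require Import ring.
Set Implicit Arguments. Unset Strict Implicit. Unset Printing Implicit Defensive.
Import GRing.Theory Num.Theory.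
Local Open Scope ring_scope.

Section Congruence.
Variables (R : idomainType) (S : subringClosed R).
Local Notation PS := (polyOver S).

Definition dvdS (f g : {poly R}) := exists2 h, h \in PS & g = h * f.

Definition congS (g p r : {poly R}) := dvdS g (p - r).

Lemma dvdS_mull f h : h \in PS -> dvdS f (h * f).
Proof. by exists h. Qed.

Lemma dvdS_trans f g k : dvdS f g -> dvdS g k -> dvdS f k.
Proof. by case=> h1 P1 -> [h2 P2 ->]; exists (h2 * h1); rewrite ?rpredM ?mulrA. Qed.

Lemma dvdS_mul2 f1 g1 f2 g2 :
  dvdS f1 g1 -> dvdS f2 g2 -> dvdS (f1 * f2) (g1 * g2).
Proof.
case=> h1 P1 -> [h2 P2 ->]; exists (h1 * h2); first exact: rpredM.
by rewrite mulrACA.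
Qed.

Lemma dvdS_prod (I : eqType) (r : seq I) (F G : I -> {poly R}) :
  {in r, forall i, dvdS (F i) (G i)} ->
  dvdS (\prod_(i <- r) F i) (\prod_(i <- r) G i).
Proof.
elim: r => [_|i r IH FG]; first by rewrite !big_nil; exists 1; rewrite ?rpred1 ?mul1r.
rewrite !big_cons; apply: dvdS_mul2; first exact/FG/mem_head.
by apply: IH => j rj; apply/FG; rewrite inE rj orbT.
Qed.

Lemma dvdS_comp f g Q : Q \in PS -> dvdS f g -> dvdS (f \Po Q) (g \Po Q).
Proof.
by move=> PQ [h Ph ->]; exists (h \Po Q); rewrite ?polyOver_comp ?comp_polyM.
Qed.

Lemma dvdS_exp f g n : dvdS f g -> dvdS (f ^+ n) (g ^+ n).
Proof.
move=> fg; elim: n => [|n IH]; first by exists 1; rewrite ?rpred1 ?mul1r.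
by rewrite !exprS; apply: dvdS_mul2.
Qed.

Lemma dvdS_cancel f g p : f != 0 -> dvdS (f * g) (f * p) -> dvdS g p.
Proof. by move=> f0 [h Ph E]; exists h => //; apply: (mulfI f0); rewrite E mulrCA. Qed.

Lemma congS_refl g p : congS g p p.
Proof. by exists 0; rewrite ?rpred0 ?subrr ?mul0r. Qed.

Lemma congS_sym g p r : congS g p r -> congS g r p.
Proof. by case=> h Ph E; exists (- h); rewrite ?rpredN // -opprB E mulNr. Qed.

Lemma congS_trans g p q r : congS g p q -> congS g q r -> congS g p r.
Proof.
case=> h1 P1 E1 [h2 P2 E2]; exists (h1 + h2); first exact: rpredD.
by rewrite mulrDl -E1 -E2 addrA subrK.
Qed.

Lemma congS_add g p1 r1 p2 r2 :
  congS g p1 r1 -> congS g p2 r2 -> congS g (p1 + p2) (r1 + r2).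
Proof.
case=> h1 P1 E1 [h2 P2 E2]; exists (h1 + h2); first exact: rpredD.
by rewrite mulrDl -E1 -E2 opprD addrACA.
Qed.

Lemma congS_mul g p1 r1 p2 r2 : p1 \in PS -> r2 \in PS ->
  congS g p1 r1 -> congS g p2 r2 -> congS g (p1 * p2) (r1 * r2).
Proof.
move=> Pp1 Pr2 [h1 P1 E1] [h2 P2 E2]; exists (p1 * h2 + h1 * r2).
  by rewrite rpredD ?rpredM.
have -> : p1 * p2 - r1 * r2 = p1 * (p2 - r2) + (p1 - r1) * r2.
  by rewrite mulrBr mulrBl addrA subrK.
by rewrite E1 E2 mulrDl mulrA [h1 * g * r2]mulrAC.
Qed.

Lemma congS_exp g p r n : p \in PS -> r \in PS ->
  congS g p r -> congS g (p ^+ n) (r ^+ n).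
Proof.
move=> Pp Pr pr; elim: n => [|n IH]; first exact: congS_refl.
by rewrite !exprS; apply: congS_mul; rewrite ?rpredX.
Qed.

Lemma congS_sum g (I : Type) (r : seq I) (F G : I -> {poly R}) :
  (forall i, congS g (F i) (G i)) ->
  congS g (\sum_(i <- r) F i) (\sum_(i <- r) G i).
Proof.
move=> FG; elim/big_ind2: _ => //; first exact: congS_refl.
by move=> *; apply: congS_add.
Qed.

Lemma congS_comp g y p r : y \in PS -> p \in PS -> r \in PS ->
  congS g p r -> congS g (y \Po p) (y \Po r).
Proof.
move=> Py Pp Pr pr; rewrite !comp_polyE; apply: congS_sum => i.
have [h Ph E] := congS_exp i Pp Pr pr.
by exists (y`_i *: h); rewrite ?polyOverZ ?(polyOverP Py) // -scalerBr E scalerAl.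
Qed.

Lemma congS_compr g Q p r : Q \in PS ->
  congS g p r -> congS (g \Po Q) (p \Po Q) (r \Po Q).
Proof. by move=> PQ /(dvdS_comp PQ); rewrite comp_polyB. Qed.

Lemma dvdS_congS g p r : congS g p r -> dvdS g r -> dvdS g p.
Proof. by move=> pr r0; rewrite -[p]subr0; apply: congS_trans pr _; rewrite /congS subr0. Qed.

Lemma congS_dvd f g p r : dvdS f g -> congS g p r -> congS f p r.
Proof. exact: dvdS_trans. Qed.

Definition unitS (g p : {poly R}) := exists2 w, w \in PS & congS g (p * w) 1.

Lemma unitS_inv g p w : w \in PS -> p * w = 1 -> unitS g p.
Proof. by move=> Pw pw1; exists w; rewrite ?pw1; last exact: congS_refl. Qed.

Lemma unitS_mul g p q : p \in PS -> unitS g p -> unitS g q -> unitS g (p * q).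
Proof.
move=> Pp [v Pv pv1] [w Pw qw1]; exists (v * w); first exact: rpredM.
by rewrite mulrACA -[1](mulr1 1); apply: congS_mul; rewrite ?rpredM ?rpred1.
Qed.

Lemma unitS_congS g p p' : p' \in PS -> unitS g p -> congS g p' p -> unitS g p'.
Proof.
move=> Pp' [w Pw pw1] p'p; exists w => //; apply: congS_trans pw1.
by apply: congS_mul => //; exact: congS_refl.
Qed.

Lemma dvdS_unit_cancel g t u : t \in PS -> unitS g u -> dvdS g (t * u) -> dvdS g t.
Proof.
move=> Pt [w Pw uw1] [h Ph E]; rewrite -(subr0 t).
have tuw : congS g (t * (u * w)) t.
  by rewrite -{2}(mulr1 t); apply: congS_mul; rewrite ?rpred1 //; exact: congS_refl.
apply: congS_trans (congS_sym tuw) _.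
by exists (h * w); rewrite ?rpredM // subr0 mulrA E mulrAC.
Qed.

(* The quotient (p^d - r^d) / (p - r) is d r^(d-1) modulo g when p = r mod g. *)
Lemma congS_sum_powers g d p r : p \in PS -> r \in PS -> congS g p r ->
  congS g (\sum_(i < d) p ^+ (d.-1 - i) * r ^+ i) (d%:R * r ^+ d.-1).
Proof.
move=> Pp Pr pr.
have -> : d%:R * r ^+ d.-1 = \sum_(i < d) r ^+ (d.-1 - i) * r ^+ i.
  rewrite mulr_natl -[d in _ *+ d]card_ord -sumr_const; apply: eq_bigr => i _.
  by rewrite -exprD subnK // -ltnS prednK // (leq_ltn_trans _ (ltn_ord i)).
apply: congS_sum => i; apply: congS_mul; rewrite ?rpredX //; last exact: congS_refl.
exact: congS_exp.
Qed.

Lemma hensel_lift g d a A j : g \in PS -> A \in PS -> a \in PS ->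
  unitS g (d%:R * A ^+ d.-1) -> congS g (A ^+ d) a ->
  exists2 P, P \in PS & congS g P A /\ congS (g ^+ j.+1) (P ^+ d) a.
Proof.
move=> Pg PA Pa unitA rootA; elim: j => [|j [P PP [PA' [h Ph Eh]]]].
  by exists A => //; split; [exact: congS_refl | rewrite expr1].
have [w Pw Pw1] : unitS g (d%:R * P ^+ d.-1).
  apply: unitS_congS unitA _; first by rewrite rpredM ?rpredX ?rpred_nat.
  by apply: congS_mul; rewrite ?rpredX ?rpred_nat //; [exact: congS_refl | exact: congS_exp].
pose P' := P - h * w * g ^+ j.+1.
have PP' : P' \in PS by rewrite rpredB ?rpredM ?rpredX.
have P'P : congS g P' P.
  exists (- (h * w * g ^+ j)); first by rewrite rpredN ?rpredM ?rpredX.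
  by rewrite /P' addrAC subrr add0r exprSr mulrA mulNr.
exists P' => //; split; first exact: congS_trans P'P PA'.
pose D := \sum_(i < d) P' ^+ (d.-1 - i) * P ^+ i.
have PD : D \in PS by apply: rpred_sum => i _; rewrite rpredM ?rpredX.
have [k Pk Ek] : congS g 1 (w * D).
  apply: congS_sym; apply: congS_trans Pw1; rewrite mulrC.
  by apply: congS_mul => //; [exact: congS_sum_powers | exact: congS_refl].
exists (h * k); first exact: rpredM.
have -> : P' ^+ d - a = (P' ^+ d - P ^+ d) + (P ^+ d - a) by rewrite addrA subrK.
rewrite subrXX -/D Eh {1}/P' addrAC subrr add0r.
have -> : - (h * w * g ^+ j.+1) * D + h * g ^+ j.+1 = h * g ^+ j.+1 * (1 - w * D) by ring.
by rewrite Ek [g ^+ j.+2]exprSr; ring.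
Qed.

Lemma hensel_unique g d A B K : g != 0 -> g \in PS -> A \in PS -> B \in PS ->
  unitS g (d%:R * B ^+ d.-1) -> congS g A B ->
  congS (g ^+ K) (A ^+ d) (B ^+ d) -> congS (g ^+ K) A B.
Proof.
move=> g0 Pg PA PB unitB AB [G PG EG].
suff: forall j, (j <= K)%N -> congS (g ^+ j) A B by apply.
elim=> [_|j IH jK]; first by exists (A - B); rewrite ?rpredB ?expr0 ?mulr1.
have [t Pt Et] := IH (ltnW jK).
pose D := \sum_(i < d) A ^+ (d.-1 - i) * B ^+ i.
have PD : D \in PS by apply: rpred_sum => i _; rewrite rpredM ?rpredX.
have unitD : unitS g D := unitS_congS PD unitB (congS_sum_powers d PA PB AB).
have gtD : dvdS g (t * D).
  apply: (@dvdS_cancel (g ^+ j)); first exact: expf_neq0.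
  exists (G * g ^+ (K - j.+1)); first by rewrite rpredM ?rpredX.
  by rewrite mulrA [g ^+ j * t]mulrC -Et -subrXX EG -mulrA -exprSr -exprD subnK.
have [t' Pt' Et'] := dvdS_unit_cancel Pt unitD gtD.
by exists t' => //; rewrite Et Et' -mulrA -exprS.
Qed.

Lemma dvdS_Xn_sub1 N e : dvdS ('X^N - 1) ('X^(e * N) - 1).
Proof.
exists (\sum_(i < e) 'X^N ^+ i); first by apply: rpred_sum => i _; rewrite rpredX ?polyOverXn.
by rewrite mulnC exprM subrX1 mulrC.
Qed.

Lemma congS_Xn_periodic N e a : congS ('X^N - 1) 'X^(e * N + a) 'X^a.
Proof.
have [h Ph E] := dvdS_Xn_sub1 N e.
exists (h * 'X^a); first by rewrite rpredM ?polyOverXn.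
by rewrite exprD -{2}(mul1r 'X^a) -mulrBl E mulrAC.
Qed.

Lemma unitS_Xn N k : (0 < N)%N -> unitS ('X^N - 1) 'X^k.
Proof.
move=> N0; exists 'X^(N.-1 * k); first exact: polyOverXn.
rewrite -exprD -[k in (k + _)%N]mul1n -mulnDl add1n prednK // -[(N * k)%N]addn0 mulnC.
by rewrite -(expr0 'X); apply: congS_Xn_periodic.
Qed.

End Congruence.

(* Phi_n divides Phi_n(q^c) when c is coprime to n: z |-> z^c permutes the
   primitive n-th roots of unity, which are the simple roots of Phi_n. *)
Lemma Cyclotomic_dvd_comp_Xn (n c : nat) : (0 < n)%N -> coprime c n ->
  exists h : {poly int}, 'Phi_n \Po 'X^c = h * 'Phi_n.
Proof.
move=> n0 co; suff: 'Phi_n %| 'Phi_n \Po 'X^c.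
  by move/(Pdiv.IdomainMonic.dvdpP (Cyclotomic_monic n)).
rewrite -dvdp_rat_int -(dvdp_map (@ratr algC)) -!map_poly_comp.
have ZtoC : (@ratr algC) \o intr =1 intr by move=> a; rewrite /= rmorph_int.
rewrite !(eq_map_poly ZtoC) map_comp_poly map_polyXn.
have [z zn] := C_prim_root_exists n0; rewrite (Cintr_Cyclotomic zn).
pose rs := image (fun k : 'I_n => z ^+ k) [pred k : 'I_n | coprime k n].
have Ecyc : cyclotomic z n = \prod_(w <- rs) ('X - w%:P) by rewrite big_image.
have rs_uniq : uniq_roots rs.
  rewrite uniq_rootsE map_inj_in_uniq ?enum_uniq // => i j _ _ /eqP.
  by rewrite (eq_prim_root_expr zn) !modn_small // => /eqP/val_inj.
have rs_roots : all (root (cyclotomic z n \Po 'X^c)) rs.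
  apply/allP => w /imageP [k kco ->]; rewrite /root horner_comp hornerXn -exprM.
  have := root_cyclotomic zn (z ^+ (k * c)); rewrite /root => ->.
  by rewrite prim_root_exp_coprime // coprimeMl co andbT.
have [q ->] := uniq_roots_prod_XsubC rs_roots rs_uniq.
by rewrite Ecyc dvdp_mull.
Qed.

Lemma Cyclotomic_dvd_Xn_sub1 (n N : nat) : (0 < n)%N -> (n %| N)%N ->
  exists h : {poly int}, 'X^N - 1 = h * 'Phi_n.
Proof.
move=> n0 /dvdnP [m ->]; rewrite mulnC exprM subrX1 -prod_Cyclotomic //.
rewrite (big_rem n) -?dvdn_divisors //=.
by exists ((\prod_(d <- rem n (divisors n)) 'Phi_d) * \sum_(i < m) 'X^n ^+ i); ring.
Qed.

Lemma prod_coprime (b : nat) (s : seq nat) :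
  all (fun n => (0 < n)%N && coprime n b) s ->
  [/\ (0 < \prod_(n <- s) n)%N, coprime b (\prod_(n <- s) n) &
      all (fun n => (0 < n)%N && (n %| \prod_(n <- s) n)%N) s].
Proof.
elim: s => [|n s IH] /=; first by rewrite big_nil coprimen1.
case/andP => /andP [n0 co] /IH [N0 Nco sN].
rewrite big_cons muln_gt0 n0 N0 coprimeMr coprime_sym co Nco dvdn_mulr //; split => //.
by apply/allP => m ms; have /andP [-> mN] := allP sN m ms; rewrite dvdn_mull.
Qed.

Lemma inverse_mod (b N : nat) : (0 < b)%N -> coprime b N ->
  exists c e, (b * c = e * N + 1)%N /\ coprime c N.
Proof.
move=> b0 bN; case: (egcdnP N b0) => c e; rewrite (eqP bN) mulnC => bc _.
exists c, e; split => //.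
by rewrite /coprime -dvdn1 -(dvdn_addr 1 (dvdn_mull e (dvdn_gcdr c N))) -bc dvdn_mull ?dvdn_gcdl.
Qed.

Section ZbSubring.
Variable b : nat.

Definition zb : pred rat :=
  fun x => if excluded_middle_informative (inZb b x) then true else false.

Lemma zbP x : reflect (inZb b x) (x \in zb).
Proof. by rewrite unfold_in /zb; case: excluded_middle_informative => h; constructor. Qed.

Lemma inZb_nz x : inZb b x ->
  exists m k, x = m%:~R / (b ^ k)%N%:R /\ (b ^ k)%N%:R != 0 :> rat.
Proof.
case=> m [k ->]; have [bk0|bk0] := eqVneq ((b ^ k)%N%:R : rat) 0; last by exists m, k.
by exists 0, 0%N; rewrite expn0 oner_eq0 bk0 invr0 mulr0 mul0r.
Qed.

Lemma zb_subring : subring_closed zb.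
Proof.
split.
- by apply/zbP; exists 1, 0%N; rewrite expn0 divr1.
- move=> x y /zbP/inZb_nz[m1 [k1 [-> n1]]] /zbP/inZb_nz[m2 [k2 [-> n2]]]; apply/zbP.
  exists (m1 * (b ^ k2)%N%:Z - m2 * (b ^ k1)%N%:Z), (k1 + k2)%N.
  rewrite -mulNr addf_div // expnD natrM; congr (_ / _).
  by rewrite rmorphB /= !rmorphM /= mulNr !pmulrn.
- move=> x y /zbP[m1 [k1 ->]] /zbP[m2 [k2 ->]]; apply/zbP.
  by exists (m1 * m2), (k1 + k2)%N; rewrite mulf_div expnD natrM rmorphM.
Qed.

HB.instance Definition _ := GRing.isSubringClosed.Build rat zb zb_subring.

Definition zbS : subringClosed rat := GRing.SubringClosed.clone rat zb _.

Lemma zb_invb : (b%:R)^-1 \in zb.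
Proof. by apply/zbP; exists 1, 1%N; rewrite expn1 div1r. Qed.

End ZbSubring.

Section Frobenius.
Variable b : nat.
Hypothesis b_gt0 : (0 < b)%N.
Local Notation PZ := (polyOver (zbS b)).
Local Notation dvdZ := (dvdS (zbS b)).
Local Notation congZ := (congS (zbS b)).

Lemma polyZbE p : polyZb b p <-> p \in PZ.
Proof.
split=> [pZ | /polyOverP pZ i]; last exact/zbP.
by apply/polyOverP => i; apply/zbP.
Qed.

Lemma congrZbE f p r : congrZb b f p r <-> congZ f p r.
Proof. by split=> [[h [/polyZbE Ph E]] | [h /polyZbE Ph E]]; exists h. Qed.

Definition phi n : {poly rat} := map_poly intr 'Phi_n.

Lemma dvdZ_map_int (f g h : {poly int}) :
  g = h * f -> dvdZ (map_poly intr f) (map_poly intr g).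
Proof.
move=> ->; exists (map_poly intr h); last exact: rmorphM.
by apply/polyOverP => i; rewrite coef_map rpred_int.
Qed.

Lemma phi_dvd_comp n c Q : (0 < n)%N -> coprime c n -> Q \in PZ ->
  congZ (phi n) Q 'X^c -> dvdZ (phi n) (phi n \Po Q).
Proof.
move=> n0 co PQ Qc; have [h E] := Cyclotomic_dvd_comp_Xn n0 co.
have Pphi : phi n \in PZ by apply/polyOverP => i; rewrite coef_map rpred_int.
apply: dvdS_congS (congS_comp Pphi PQ (polyOverXn _ _) Qc) _.
by have := dvdZ_map_int E; rewrite map_comp_poly map_polyXn.
Qed.

Lemma phi_dvd_Xn_sub1 n N : (0 < n)%N -> (n %| N)%N -> dvdZ (phi n) ('X^N - 1).
Proof.
move=> n0 nN; have [h E] := Cyclotomic_dvd_Xn_sub1 n0 nN.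
by have := dvdZ_map_int E; rewrite rmorphB /= map_polyXn rmorph1.
Qed.

Lemma prod_phi_dvd_comp s c Q : all (fun n => (0 < n)%N && coprime c n) s ->
  Q \in PZ -> {in s, forall n, congZ (phi n) Q 'X^c} ->
  dvdZ (\prod_(n <- s) phi n) ((\prod_(n <- s) phi n) \Po Q).
Proof.
move=> /allP sP PQ sQ; rewrite rmorph_prod; apply: dvdS_prod => n ns.
by have /andP[n0 co] := sP n ns; exact: phi_dvd_comp (sQ n ns).
Qed.

Lemma prod_phi_dvd_pow s N : all (fun n => (0 < n)%N && (n %| N)%N) s ->
  dvdZ (\prod_(n <- s) phi n) (('X^N - 1) ^+ size s).
Proof.
elim: s => [_|n s IH] /=; first by rewrite big_nil; exists 1; rewrite ?rpred1 ?mul1r.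
case/andP=> /andP[n0 nN] /IH sN; rewrite big_cons exprS.
exact: dvdS_mul2 (phi_dvd_Xn_sub1 n0 nN) sN.
Qed.

Lemma frob_dvd f : PhiStar b f -> dvdZ f (f \Po 'X^b).
Proof.
case=> s [sP ->]; apply: prod_phi_dvd_comp (polyOverXn _ _) _; last first.
  by move=> n _; exact: congS_refl.
by apply/allP => n ns; have /andP[-> co] := allP sP n ns; rewrite coprime_sym.
Qed.

Lemma frobenius_inverse_XN N c e K : (0 < N)%N -> (b * c = e * N + 1)%N ->
  exists2 P, P \in PZ & [/\ congZ ('X^N - 1) P 'X^c,
    congZ (('X^N - 1) ^+ K.+1) (P ^+ b) 'X &
    congZ (('X^N - 1) ^+ K.+1) (P \Po 'X^b) 'X].
Proof.
move=> N0 bc; set g := 'X^N - 1.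
have Pg : g \in PZ by rewrite rpredB ?polyOverXn ?rpred1.
have g0 : g != 0 by rewrite monic_neq0 // monicXnsubC.
have unit_bX k : unitS (zbS b) g (b%:R * 'X^k).
  apply: unitS_mul (unitS_Xn _ _ N0); first exact: rpred_nat.
  apply: (@unitS_inv _ _ _ _ ((b%:R : rat)^-1)%:P); first by rewrite polyOverC zb_invb.
  by rewrite -polyC_natr -polyCM divff // pnatr_eq0 -lt0n.
have Xc_root : congZ g ('X^c ^+ b) 'X.
  by rewrite -exprM mulnC bc -[X in congZ _ _ X]expr1; apply: congS_Xn_periodic.
have unit_Xc : unitS (zbS b) g (b%:R * 'X^c ^+ b.-1) by rewrite -exprM.
have [P PP [Pc Pb]] := hensel_lift K Pg (polyOverXn _ c) (polyOverX _) unit_Xc Xc_root.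
exists P => //; split => //.
have PPX : P \Po 'X^b \in PZ by rewrite polyOver_comp ?polyOverXn.
have g_dvd_gX : dvdZ g (g \Po 'X^b).
  by rewrite comp_polyB comp_polyC comp_Xn_poly -exprM; exact: dvdS_Xn_sub1.
apply: hensel_unique g0 Pg PPX (polyOverX _) (unit_bX b.-1) _ _.
  apply: congS_trans (congS_dvd g_dvd_gX (congS_compr (polyOverXn _ _) Pc)) _.
  by rewrite comp_Xn_poly -exprM mulnC exprM; exact: Xc_root.
apply: congS_dvd (dvdS_exp K.+1 g_dvd_gX) _; rewrite -rmorphXn -rmorphXn /=.
by have := congS_compr (polyOverXn _ b) Pb; rewrite comp_polyX.
Qed.

Lemma frobenius_inverse f : PhiStar b f ->
  exists2 P, P \in PZ &
    [/\ congZ f (P ^+ b) 'X, congZ f (P \Po 'X^b) 'X & dvdZ f (f \Po P)].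
Proof.
case=> s [sP ->]; have [N0 bN sN] := prod_coprime sP.
set N := (\prod_(n <- s) n)%N in N0 bN sN.
have [c [e [bc cN]]] := inverse_mod b_gt0 bN.
have [P PP [Pc Pb PX]] := frobenius_inverse_XN (size s) N0 bc.
have f_dvd : dvdZ (\prod_(n <- s) phi n) (('X^N - 1) ^+ (size s).+1).
  rewrite exprS; apply: dvdS_trans (prod_phi_dvd_pow sN) (dvdS_mull _ _).
  by rewrite rpredB ?polyOverXn ?rpred1.
exists P => //; split; [exact: congS_dvd f_dvd Pb | exact: congS_dvd f_dvd PX |].
apply: (prod_phi_dvd_comp (c := c)) => //.
  by apply/allP => n ns; have /andP[-> nN] := allP sN n ns; rewrite (coprime_dvdr nN).
by move=> n ns; have /andP[n0 nN] := allP sN n ns; exact: congS_dvd (phi_dvd_Xn_sub1 n0 nN) Pc.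
Qed.

Lemma frob_congZ f p r : PhiStar b f ->
  congZ f p r -> congZ f (p \Po 'X^b) (r \Po 'X^b).
Proof. by move=> /frob_dvd fX /(congS_compr (polyOverXn _ b)); exact: congS_dvd. Qed.

Lemma frob_congZ_inj f p r : PhiStar b f -> p \in PZ -> r \in PZ ->
  congZ f (p \Po 'X^b) (r \Po 'X^b) -> congZ f p r.
Proof.
move=> /frobenius_inverse[P PP [Pb _ fP]] Pp Pr pr.
have back y : y \in PZ -> congZ f ((y \Po 'X^b) \Po P) y.
  move=> Py; rewrite -comp_polyA comp_Xn_poly -{2}(comp_polyXr y).
  exact: congS_comp Py (rpredX _ PP) (polyOverX _) Pb.
apply: congS_trans (congS_sym (back p Pp)) _; apply: congS_trans (back r Pr).
exact: congS_dvd fP (congS_compr PP pr).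
Qed.

Lemma limeq_ext x y : (forall f, x f = y f) -> limeq b x y.
Proof. by move=> xy f _; rewrite xy; exact/congrZbE/congS_refl. Qed.

Lemma limfam_Frob x : limfam b x -> limfam b (Frob b x).
Proof.
case=> xP xc; split=> [f fS | f g fS gS fg].
  by apply/polyZbE; rewrite polyOver_comp ?polyOverXn //; exact/polyZbE/xP.
by apply/congrZbE; rewrite /Frob; apply: (frob_congZ fS); apply/congrZbE; exact: xc.
Qed.

Lemma limeq_Frob x y : limeq b x y -> limeq b (Frob b x) (Frob b y).
Proof.
by move=> xy f fS; apply/congrZbE; rewrite /Frob; apply: (frob_congZ fS); apply/congrZbE; exact: xy.
Qed.

Lemma limeq_Frob_inj x y : limfam b x -> limfam b y ->
  limeq b (Frob b x) (Frob b y) -> limeq b x y.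
Proof.
move=> [xP _] [yP _] xy f fS; apply/congrZbE.
by apply: (frob_congZ_inj fS); [exact/polyZbE/xP | exact/polyZbE/yP | exact/congrZbE/xy].
Qed.

Lemma limfam_of_Frob x y : limfam b y -> (forall f, PhiStar b f -> x f \in PZ) ->
  limeq b (Frob b x) y -> limfam b x.
Proof.
move=> [_ yc] xP xy; split=> [f fS | f g fS gS fg]; first exact/polyZbE/xP.
apply/congrZbE; apply: (frob_congZ_inj fS (xP g gS) (xP f fS)).
have dfg : dvdZ f g by move/congrZbE: fg; rewrite /congS subr0.
apply: congS_trans (congS_dvd dfg (proj1 (congrZbE _ _ _) (xy g gS))) _.
apply: congS_trans (congS_sym (proj1 (congrZbE _ _ _) (xy f fS))).
by apply/congrZbE; exact: yc.
Qed.

(* Surjectivity: x_f := y_f(P_f), with an inverse P_f of Frobenius modulo f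
   chosen for every f. *)
Lemma Frob_surj y : limfam b y -> exists x, limfam b x /\ limeq b (Frob b x) y.
Proof.
move=> yF; have [yP _] := yF.
have /choice[P PS] : forall f, exists P : {poly rat},
    PhiStar b f -> P \in PZ /\ congZ f (P \Po 'X^b) 'X.
  move=> f; case: (excluded_middle_informative (PhiStar b f)).
    by case/frobenius_inverse => P PP [_ PX _]; exists P.
  by exists 0.
pose x f := y f \Po P f.
have xP f : PhiStar b f -> x f \in PZ.
  by move=> fS; rewrite polyOver_comp ?(PS f fS).1 //; exact/polyZbE/yP.
have xy : limeq b (Frob b x) y.
  move=> f fS; apply/congrZbE; have [PP PX] := PS f fS; have /polyZbE Py := yP f fS.
  rewrite /Frob /x -comp_polyA -{2}(comp_polyXr (y f)).
  exact: congS_comp Py (polyOver_comp PP (polyOverXn _ _)) (polyOverX _) PX.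
by exists x; split => //; exact: limfam_of_Frob yF xP xy.
Qed.

End Frobenius.

Theorem theorem13 (b : nat) (hb : (0 < b)%N) :
  (* well-defined on elements *)
  (forall x, limfam b x -> limfam b (Frob b x)) /\
  (* well-defined on classes *)
  (forall x y, limfam b x -> limfam b y -> limeq b x y ->
     limeq b (Frob b x) (Frob b y)) /\
  (* Z[1/b]-algebra homomorphism *)
  (forall x y, limfam b x -> limfam b y ->
     limeq b (Frob b (fun f => x f + y f)) (fun f => Frob b x f + Frob b y f)) /\
  (forall x y, limfam b x -> limfam b y ->
     limeq b (Frob b (fun f => x f * y f)) (fun f => Frob b x f * Frob b y f)) /\
  (forall c x, inZb b c -> limfam b x ->
     limeq b (Frob b (fun f => c *: x f)) (fun f => c *: Frob b x f)) /\
  limeq b (Frob b (fun _ => 1)) (fun _ => 1) /\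
  (* injective *)
  (forall x y, limfam b x -> limfam b y ->
     limeq b (Frob b x) (Frob b y) -> limeq b x y) /\
  (* surjective *)
  (forall y, limfam b y -> exists x, limfam b x /\ limeq b (Frob b x) y).
Proof.
split; first exact: limfam_Frob.
split; first by move=> x y _ _; exact: limeq_Frob.
split; first by move=> x y _ _; apply: limeq_ext => f; exact: comp_polyD.
split; first by move=> x y _ _; apply: limeq_ext => f; exact: comp_polyM.
split; first by move=> c x _ _; apply: limeq_ext => f; exact: comp_polyZ.
split; first by apply: limeq_ext => f; exact: rmorph1.
split; first exact: limeq_Frob_inj.
exact: Frob_surj.
Qed.
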